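(* Let $(A,B,\mathfrak H)$ be a P-module and let $\xi,\eta\in\mathfrak H$ be vectors contained in rays $p,q$ respectively. If $p\neq q$ then $\xi$ and $\eta$ are orthogonal. In particular, if $\xi\in\mathfrak H$ is contained in a ray $p$, then $p$ is eventually periodic and the length of a period of $p$ is at most $\dim(\mathfrak H)$.
   Context: A P-module is $(A,B,\mathfrak H)$ with $\mathfrak H$ a finite-dimensional complex Hilbert space and $A,B$ operators with $A^*A+B^*B=\mathrm{id}$. A ray is an infinite binary sequence $p=x_1x_2\cdots$; $p_n=x_1\cdots x_n$. For a finite binary word $w=x_1\cdots x_n$ and $\xi\in\mathfrak H$, $w\xi:=X_{x_n}\cdots X_{x_1}\xi$ where $X_0=A$, $X_1=B$. A non-zero vector $\xi$ is contained in the ray $p$ if $\|p_n\xi\|=\|\xi\|$ for all $n\ge1$. A ray $p$ is eventually periodic if $p=v\cdot w^\infty$ for finite words $v,w$ ($w$ a period). *)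

(* The scalar field is C := R[i] with R : realType (so C is the
   complex numbers); a finite-dimensional complex Hilbert space of dimension n
   is modelled (up to unitary isomorphism) by column vectors 'cV[C]_n with the
   standard inner product. *)
From HB Require Import structures.
From mathcomp Require Import all_boot all_order all_algebra.
From mathcomp Require Import complex.
From mathcomp Require Import reals.
Set Implicit Arguments. Unset Strict Implicit. Unset Printing Implicit Defensive.
Import Order.TTheory GRing.Theory Num.Theory.
Local Open Scope ring_scope.
Local Open Scope complex_scope.

Section PModules.
Variable R : realType.
Notation C := (R[i]).

Definition adjmx m n (M : 'M[C]_(m, n)) : 'M[C]_(n, m) := (map_mx Num.conj M)^T.

(* standard inner product, conjugate-linear in the first argument *)
Definition hdot n (x y : 'cV[C]_n) : C := (adjmx x *m y) 0 0.

Definition hnorm n (x : 'cV[C]_n) : C := sqrtC (hdot x x).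

Definition is_Pmodule n (A B : 'M[C]_n) : Prop :=
  adjmx A *m A + adjmx B *m B = 1%:M.

(* rays: p : nat -> bool, with x_1 = p 0, x_2 = p 1, ... *)
Definition prefix (p : nat -> bool) (k : nat) : seq bool := mkseq p k.

(* w xi := X_{x_k} ... X_{x_1} xi, X_0 = A, X_1 = B *)
Definition act_word n (A B : 'M[C]_n) (w : seq bool) (xi : 'cV[C]_n) : 'cV[C]_n :=
  foldl (fun v (b : bool) => (if b then B else A) *m v) xi w.

Definition contained n (A B : 'M[C]_n) (xi : 'cV[C]_n) (p : nat -> bool) : Prop :=
  xi != 0 /\ forall k : nat, (1 <= k)%N -> hnorm (act_word A B (prefix p k) xi) = hnorm xi.

Definition ray_eq_vwinf (p : nat -> bool) (v w : seq bool) : Prop :=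
  forall i : nat, p i = if (i < size v)%N then nth false v i
                        else nth false w ((i - size v) %% size w).

End PModules.

(** Since [A^*A + B^*B = 1], a vector [u] with [|Xu| = |u|] for one letter
    [X] is killed by the other letter, and then [<Xu, Xv> = <u, v>] for every
    [v] killed by that other letter.  So if [xi] and [eta] lie in rays [p]
    and [q] that first differ at position [k], the inner product [<xi, eta>]
    survives unchanged up to step [k], where one vector is killed by [A] and
    the other by [B], which forces it to vanish.  Applying this to the tails
    of a single ray [p] containing [xi]: the vectors [p_0 xi, ..., p_n xi]
    are nonzero and lie in the tails of [p] at [0, ..., n]; they cannot all be
    pairwise orthogonal in an [n]-dimensional space, so two of these tails
    coincide, and [p] is eventually periodic with period at most [n]. *)
From Pilot Require Import Defs.
From HB Require Import structures.
From mathcomp Require Import all_boot all_order all_algebra.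
From mathcomp Require Import complex reals.
From Stdlib Require Import FunctionalExtensionality Classical.
From mathcomp Require Import zify.
Import Order.TTheory GRing.Theory Num.Theory.
Local Open Scope ring_scope.
Local Open Scope complex_scope.

Section InnerProduct.
Variable R : realType.
Notation C := (R[i]).

Lemma hdotE n (x y : 'cV[C]_n) : hdot x y = \sum_j (x j 0)^* * y j 0.
Proof. by rewrite /hdot mxE; apply: eq_bigr => j _; rewrite !mxE. Qed.

Lemma hdot0l n (y : 'cV[C]_n) : hdot 0 y = 0.
Proof. by rewrite hdotE big1 // => j _; rewrite mxE conjC0 mul0r. Qed.

Lemma hdot0r n (x : 'cV[C]_n) : hdot x 0 = 0.
Proof. by rewrite hdotE big1 // => j _; rewrite mxE mulr0. Qed.

Lemma hdotxx_eq0 n (x : 'cV[C]_n) : (hdot x x == 0) = (x == 0).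
Proof.
apply/eqP/eqP => [|->]; last exact: hdot0l.
rewrite hdotE => /eqP; rewrite psumr_eq0 => [/allP x0|j _]; last first.
  by rewrite -normCKC exprn_ge0.
apply/matrixP => j k; rewrite (ord1 k) mxE; apply/eqP.
by have /implyP/(_ isT) := x0 j (mem_index_enum j); rewrite -normCKC sqrf_eq0 normr_eq0.
Qed.

Lemma adjmxM m n p (M : 'M[C]_(m, n)) (N : 'M[C]_(n, p)) :
  adjmx (M *m N) = adjmx N *m adjmx M.
Proof. by rewrite /adjmx map_mxM trmx_mul. Qed.

Lemma adjmx_mulmxE m n (M : 'M[C]_(m, n)) i j :
  (adjmx M *m M) i j = hdot (col i M) (col j M).
Proof. by rewrite hdotE mxE; apply: eq_bigr => k _; rewrite !mxE. Qed.

(* The Gram matrix of the family is diagonal with nonzero diagonal, hence of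
   full rank [m], and its rank is at most that of the [n x m] matrix of the
   family. *)
Lemma orthogonal_family_leq_dim m n (u : 'I_m -> 'cV[C]_n) :
  (forall i, u i != 0) -> (forall i j, i != j -> hdot (u i) (u j) = 0) ->
  (m <= n)%N.
Proof.
move=> u_neq0 u_orth; pose M := \matrix_(k, i) u i k 0.
have colM i : col i M = u i by apply/matrixP => k l; rewrite (ord1 l) !mxE.
have gramM : adjmx M *m M = diag_mx (\row_i hdot (u i) (u i)).
  apply/matrixP => i j; rewrite adjmx_mulmxE !colM !mxE.
  by have [->|/u_orth] := eqVneq i j; rewrite ?mulr1n ?mulr0n.
have gram_unit : adjmx M *m M \in unitmx.
  rewrite gramM unitmxE det_diag unitfE; apply/prodf_neq0 => i _.
  by rewrite mxE hdotxx_eq0.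
rewrite -[m](mxrank_unit gram_unit).
exact: leq_trans (mxrankM_maxr _ _) (rank_leq_row M).
Qed.

End InnerProduct.

Definition ray_drop (i : nat) (p : nat -> bool) : nat -> bool := fun t => p (i + t).

Lemma ray_eq_vwinf_drop (p : nat -> bool) (i j : nat) : (i < j)%N ->
  ray_drop i p = ray_drop j p ->
  ray_eq_vwinf p (mkseq p i) (mkseq (ray_drop i p) (j - i)).
Proof.
move=> ltij dropij t; rewrite !size_mkseq.
have dropE s : p (i + s)%N = p (j + s)%N by have := congr1 (fun f => f s) dropij.
have periodic k s : p (i + (s + k * (j - i)))%N = p (i + s)%N.
  elim: k s => [|k IHk] s; first by rewrite mul0n addn0.
  have -> : (i + (s + k.+1 * (j - i)) = j + (s + k * (j - i)))%N by lia.
  by rewrite -dropE IHk.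
case: ltnP => [ltti|leit]; first by rewrite nth_mkseq.
rewrite nth_mkseq ?ltn_pmod ?subn_gt0 // /ray_drop.
by rewrite -{1}(subnKC leit) {1}(divn_eq (t - i) (j - i)) [(_ * _ + _)%N]addnC periodic.
Qed.

Section PModule.
Variable R : realType.
Notation C := (R[i]).
Variable n : nat.
Variables A B : 'M[C]_n.
Hypothesis PM : is_Pmodule A B.

Definition letter (b : bool) : 'M[C]_n := if b then B else A.

Definition ray_orbit (p : nat -> bool) (xi : 'cV[C]_n) (k : nat) : 'cV[C]_n :=
  act_word A B (Defs.prefix p k) xi.

Lemma ray_orbitS p xi k : ray_orbit p xi k.+1 = letter (p k) *m ray_orbit p xi k.
Proof. by rewrite /ray_orbit /act_word /Defs.prefix mkseqS foldl_rcons. Qed.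

Lemma ray_orbit_drop p xi i k :
  ray_orbit p xi (i + k) = ray_orbit (ray_drop i p) (ray_orbit p xi i) k.
Proof. by elim: k => [|k IHk]; rewrite ?addn0 // addnS !ray_orbitS IHk. Qed.

Lemma hdot_Pmodule (u v : 'cV[C]_n) :
  hdot (A *m u) (A *m v) + hdot (B *m u) (B *m v) = hdot u v.
Proof.
have addE (M N : 'M[C]_1) : M 0 0 + N 0 0 = (M + N) 0 0 by rewrite mxE.
rewrite /hdot !adjmxM addE -!mulmxA !(mulmxA (adjmx A)) !(mulmxA (adjmx B)).
by rewrite -mulmxDr -mulmxDl PM mul1mx.
Qed.

Lemma hdot_letters b (u v : 'cV[C]_n) :
  hdot (letter b *m u) (letter b *m v) + hdot (letter (~~ b) *m u) (letter (~~ b) *m v)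
  = hdot u v.
Proof. by case: b; rewrite -[RHS]hdot_Pmodule // addrC. Qed.

Lemma contained_hdot xi p k : contained A B xi p ->
  hdot (ray_orbit p xi k) (ray_orbit p xi k) = hdot xi xi.
Proof.
case: k => [|k] [_ norm_orbit] //.
by rewrite -[LHS]sqrtCK -[RHS]sqrtCK; have := norm_orbit k.+1 isT; rewrite /hnorm => ->.
Qed.

Lemma contained_other_letter xi p k : contained A B xi p ->
  letter (~~ p k) *m ray_orbit p xi k = 0.
Proof.
move=> xi_p; apply/eqP; rewrite -hdotxx_eq0.
have := hdot_letters (p k) (ray_orbit p xi k) (ray_orbit p xi k).
by rewrite -ray_orbitS !contained_hdot // => /(canRL (addKr _)) ->; rewrite addNr.
Qed.

Lemma contained_drop xi p i : contained A B xi p ->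
  contained A B (ray_orbit p xi i) (ray_drop i p).
Proof.
move=> xi_p; have [xi_neq0 _] := xi_p; split.
  by rewrite -hdotxx_eq0 contained_hdot // hdotxx_eq0.
by move=> k _; rewrite /hnorm -/(ray_orbit _ _ k) -ray_orbit_drop !contained_hdot.
Qed.

Lemma contained_hdot_common_prefix xi eta p q k :
  contained A B xi p -> contained A B eta q -> (forall j, (j < k)%N -> p j = q j) ->
  hdot xi eta = hdot (ray_orbit p xi k) (ray_orbit q eta k).
Proof.
move=> xi_p eta_q; elim: k => [//|k IHk] pq.
rewrite IHk => [|j ltjk]; last exact/pq/ltnW.
rewrite !ray_orbitS -(pq k (ltnSn k)) -[in LHS](hdot_letters (p k)).
by rewrite contained_other_letter // hdot0l addr0.
Qed.

Lemma contained_orthogonal xi eta p q :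
  contained A B xi p -> contained A B eta q -> p <> q -> hdot xi eta = 0.
Proof.
move=> xi_p eta_q neq_pq.
have ex_neq : exists k, p k != q k.
  apply: NNPP => pq; apply/neq_pq/functional_extensionality => k.
  by apply/eqP/negPn/negP => pq_k; apply: pq; exists k.
have [k pq_k min_k] := ex_minnP ex_neq.
rewrite (contained_hdot_common_prefix _ _ _ _ k xi_p eta_q); last first.
  by move=> j ltjk; apply/eqP/negPn/negP => /min_k; rewrite leqNgt ltjk.
rewrite -(hdot_letters (p k)).
have q_k : q k = ~~ p k by move: pq_k; case: (p k); case: (q k).
have := contained_other_letter _ _ k eta_q; rewrite q_k negbK => ->.
by rewrite contained_other_letter // hdot0l hdot0r addr0.
Qed.

Lemma contained_drop_repeats xi p : contained A B xi p ->
  exists i j, [/\ (i < j)%N, (j <= n)%N & ray_drop i p = ray_drop j p].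
Proof.
move=> xi_p; apply: NNPP => no_repeat.
suff : (n.+1 <= n)%N by rewrite ltnn.
apply: (@orthogonal_family_leq_dim R _ _ (fun k : 'I_n.+1 => ray_orbit p xi k)).
  by move=> k; have [] := contained_drop _ _ k xi_p.
move=> k l neq_kl.
apply: contained_orthogonal (contained_drop _ _ k xi_p) (contained_drop _ _ l xi_p) _.
have [ltkl|ltlk|/val_inj eq_kl] := ltngtP k l => drop_kl.
- by apply: no_repeat; exists k, l; split; rewrite // -ltnS.
- by apply: no_repeat; exists l, k; split; rewrite // -ltnS.
- by rewrite eq_kl eqxx in neq_kl.
Qed.

End PModule.

Theorem lemma2p9 (R : realType) (n : nat) (A B : 'M[R[i]]_n) :
  is_Pmodule A B ->
  (forall (xi eta : 'cV[R[i]]_n) (p q : nat -> bool),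
      contained A B xi p -> contained A B eta q -> p <> q -> hdot xi eta = 0) /\
  (forall (xi : 'cV[R[i]]_n) (p : nat -> bool),
      contained A B xi p ->
      exists v w : seq bool,
        (0 < size w)%N /\ (size w <= n)%N /\ ray_eq_vwinf p v w).
Proof.
move=> PM; split=> [|xi p xi_p]; first exact: contained_orthogonal.
have [i [j [ltij lejn drop_ij]]] := @contained_drop_repeats R n A B PM xi p xi_p.
exists (mkseq p i), (mkseq (ray_drop i p) (j - i)).
rewrite size_mkseq subn_gt0 ltij; split; first by [].
split; first exact: leq_trans (leq_subr _ _) lejn.
exact: ray_eq_vwinf_drop.
Qed.
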